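(* Fix an integer $q\ge 2$ and an integer $s\ge 0$. For $n\ge1$, $N=\{1,\dots,n\}$, let $F^c=\{-\tfrac{q-1}{2},\dots,\tfrac{q-1}{2}\}$ (step $1$), $\Omega=(F^c)^N$, and for couplings $J_A\ge 0$ ($A\subset N$, $|A|\ge2$) let $x_A=e^{J_A}$ and $Z_\gamma=\prod_A x_A^{\delta_{(\sigma^A)_\gamma}}$, where $\delta_{(\sigma^A)_\gamma}=1$ if all coordinates $(\sigma_i)_\gamma$, $i\in A$, are equal and $0$ otherwise. For a list $R$ of elements of $N$ (repetitions allowed) and $A'\subset\Omega$ put $\zeta(R,A')=\sum_{\gamma\in A'}(\sigma^R)_\gamma Z_\gamma$, where $(\sigma^R)_\gamma=\prod_{i\in R}(\sigma_i)_\gamma$ with multiplicity, and $\zeta(R)=\zeta(R,\Omega)$. Suppose that $\zeta(R)\ge 0$ for every $n\ge1$, every list $R$ of elements of $\{1,\dots,n\}$, and every choice of couplings with at most $s$ nonzero $J_A$. Then for every $n$, every list $R$ of elements of $N$, every choice of couplings with $s$ nonzero $J_A$, and every $B\subset N$, we have $\zeta(R,B^{(1)})\ge 0$, where $B^{(1)}=\{\gamma\in\Omega:\delta_{(\sigma^B)_\gamma}=1\}$.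
   Context: $\zeta(R)$ equals $Z\langle\sigma^R\rangle$ for the generalized Potts Gibbs measure $P(\gamma)=Z_\gamma/Z$, $Z=\sum_\gamma Z_\gamma$, with centered spin values. The paper's hypothesis is phrased as ''$\zeta^N_s(R)\ge0$ for any $n$ vertices and $q$ number of spins''; it is here read as holding for all systems with at most $s$ nonzero couplings. *)

From HB Require Import structures.
From mathcomp Require Import all_boot all_order all_algebra.
From mathcomp Require Import reals.
From mathcomp Require Import sequences.
Set Implicit Arguments. Unset Strict Implicit. Unset Printing Implicit Defensive.
Import Order.TTheory GRing.Theory Num.Theory.
Local Open Scope ring_scope.

(* A configuration gamma : N -> {0,..,q-1}; spin index k stands for the
   centered value k - (q-1)/2, so spins range over {-(q-1)/2,...,(q-1)/2}. *)
Definition config (q n : nat) := {ffun 'I_n -> 'I_q}.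

Definition spin {R : realType} (q : nat) (k : 'I_q) : R :=
  (k : nat)%:R - (q.-1)%:R / 2.

Definition delta (q n : nat) (A : {set 'I_n}) (g : config q n) : bool :=
  [forall i in A, forall j in A, g i == g j].

Definition Zg {R : realType} (q n : nat) (J : {set 'I_n} -> R) (g : config q n) : R :=
  \prod_(A : {set 'I_n} | (2 <= #|A|)%N) (expR (J A)) ^+ (delta A g).

Definition sigmaR {R : realType} (q n : nat) (Rl : seq 'I_n) (g : config q n) : R :=
  \prod_(i <- Rl) spin (R:=R) (g i).

Definition zeta {R : realType} (q n : nat) (J : {set 'I_n} -> R)
  (Rl : seq 'I_n) (A' : {set config q n}) : R :=
  \sum_(g in A') sigmaR (R:=R) Rl g * Zg J g.

Definition B1 (q n : nat) (B : {set 'I_n}) : {set config q n} :=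
  [set g | delta B g].

Definition couplings_nonneg {R : realType} (n : nat) (J : {set 'I_n} -> R) : Prop :=
  forall A : {set 'I_n}, (2 <= #|A|)%N -> 0 <= J A.

Definition num_nonzero {R : realType} (n : nat) (J : {set 'I_n} -> R) : nat :=
  #|[set A : {set 'I_n} | (2 <= #|A|)%N && (J A != 0)]|.

From HB Require Import structures.
From mathcomp Require Import all_boot all_order all_algebra.
From mathcomp Require Import reals.
From mathcomp Require Import sequences exp.
Import Order.TTheory GRing.Theory Num.Theory.
Local Open Scope ring_scope.

(* The configurations in B^(1) are exactly those that factor through the
   contraction f : N -> N' identifying all sites of B to a single site.
   Pulling back along f, Z_gamma becomes a positive constant (the factors of
   the sets A collapsed to one site, for which delta is always 1) times the
   Z-weight of the pushed-forward couplings J'_{A'} = sum_{f(A) = A'} J_A,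
   which are again nonnegative and have no more nonzero entries than J,
   while sigma^R becomes sigma^{f(R)}.  Hence zeta(R, B^(1)) is a positive
   multiple of a full zeta on the contracted system. *)

Lemma delta_card_le1 q n (A : {set 'I_n}) (c : config q n) :
  (#|A| <= 1)%N -> delta A c.
Proof.
move=> /card_le1_eqP A_le1; apply/forall_inP=> i iA; apply/forall_inP=> j jA.
by rewrite (A_le1 i j iA jA).
Qed.

Lemma exists_contraction n (B : {set 'I_n}) : (0 < n)%N ->
  exists m (f : 'I_n -> 'I_m) (g : 'I_m -> 'I_n),
    [/\ (0 < m)%N, cancel g f
      & forall i j, (f i == f j) = (i == j) || (i \in B) && (j \in B)].
Proof.
move=> n_gt0; pose b := odflt (Ordinal n_gt0) [pick x in B].
have bB i : i \in B -> b \in B by rewrite /b; case: pickP => [x|/(_ i)->].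
pose rep i := if i \in B then b else i.
have eq_rep i j : (rep i == rep j) = (i == j) || (i \in B) && (j \in B).
  rewrite /rep; case iB: (i \in B); case jB: (j \in B); rewrite ?orbT ?orbF //.
  - by rewrite eqxx.
  - have b_j : b != j by apply: contraFN jB => /eqP <-; apply: bB iB.
    have i_j : i != j by apply: contraFN jB => /eqP <-.
    by rewrite (negbTE b_j) (negbTE i_j).
  - have i_b : i != b by apply: contraFN iB => /eqP ->; apply: bB jB.
    have i_j : i != j by apply: contraFN iB => /eqP ->.
    by rewrite (negbTE i_b) (negbTE i_j).
have repK i : rep (rep i) = rep i.
  by rewrite /rep; case iB: (i \in B); rewrite ?iB ?(bB i).
pose S := rep @: [set: 'I_n].
have repS i : rep i \in S by apply: imset_f; rewrite inE.
exists #|S|, (fun i => enum_rank_in (repS (Ordinal n_gt0)) (rep i)),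
  (@enum_val _ (mem S)).
split.
- by apply/card_gt0P; exists (rep (Ordinal n_gt0)).
- move=> j; have /imsetP [k _ val_j] := enum_valP j.
  by rewrite val_j repK -val_j enum_valK_in.
- move=> i j; rewrite -eq_rep; apply/eqP/eqP => [|->] //.
  exact: enum_rank_in_inj.
Qed.

Section Contraction.
Variables (R : realType) (q n m : nat) (B : {set 'I_n}).
Variables (f : 'I_n -> 'I_m) (g : 'I_m -> 'I_n).
Hypothesis fgK : cancel g f.
Hypothesis eq_f : forall i j, (f i == f j) = (i == j) || (i \in B) && (j \in B).

Definition pullback (c : config q m) : config q n := [ffun i => c (f i)].

Lemma pullback_inj : injective pullback.
Proof.
move=> c1 c2 /ffunP eq_c; apply/ffunP=> j.
by have := eq_c (g j); rewrite !ffunE fgK.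
Qed.

Lemma delta_pullback A c : delta A (pullback c) = delta (f @: A) c.
Proof.
apply/forall_inP/forall_inP => [dA _ /imsetP [i iA ->]|dfA i iA].
  apply/forall_inP=> _ /imsetP [j jA ->].
  by have /forall_inP/(_ j jA) := dA i iA; rewrite !ffunE.
apply/forall_inP=> j jA; rewrite !ffunE.
exact: (forall_inP (dfA _ (imset_f f iA)) _ (imset_f f jA)).
Qed.

Lemma B1_pullback : B1 q B = pullback @: [set: config q m].
Proof.
apply/setP=> c; rewrite inE; apply/idP/imsetP => [dB|[c' _ ->]].
  exists [ffun j => c (g j)]; rewrite ?inE //; apply/ffunP=> i; rewrite !ffunE.
  have /orP [/eqP-> // | /andP [gfiB iB]] : (g (f i) == i) || (g (f i) \in B) && (i \in B).
    by rewrite -eq_f fgK.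
  by have /forall_inP/(_ _ gfiB)/eqP := forall_inP dB i iB.
apply/forall_inP=> i iB; apply/forall_inP=> j jB.
by rewrite !ffunE (eqP (_ : f i == f j)) // eq_f iB jB orbT.
Qed.

Definition push_couplings (J : {set 'I_n} -> R) (A' : {set 'I_m}) : R :=
  \sum_(A : {set 'I_n} | (2 <= #|A|)%N && (f @: A == A')) J A.

Definition collapsed_weight (J : {set 'I_n} -> R) : R :=
  \prod_(A : {set 'I_n} | (2 <= #|A|)%N && ~~ (2 <= #|f @: A|)%N) expR (J A).

Lemma collapsed_weight_gt0 J : 0 < collapsed_weight J.
Proof. by apply: prodr_gt0 => A _; apply: expR_gt0. Qed.

Lemma Zg_pullback J c :
  Zg J (pullback c) = collapsed_weight J * Zg (push_couplings J) c.
Proof.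
rewrite /Zg (bigID (fun A : {set 'I_n} => (2 <= #|f @: A|)%N)) /= mulrC.
congr (_ * _).
  apply: eq_bigr => A /andP [_ fA_le1].
  by rewrite delta_pullback delta_card_le1 // leqNgt.
rewrite (partition_big (fun A => f @: A) (fun A' : {set 'I_m} => (2 <= #|A'|)%N)
  (P := fun A : {set 'I_n} => (2 <= #|A|)%N && (2 <= #|f @: A|)%N))
  => [|A /andP []] //=.
apply: eq_bigr => A' A'_ge2; rewrite /push_couplings expR_sum.
rewrite (eq_bigr (fun A => expR (J A) ^+ delta A' c)) => [|A /andP [_ /eqP <-]];
  last by rewrite delta_pullback.
case: (delta A' c); last by rewrite big1.
apply: eq_bigl => A; rewrite -andbA; apply: andb_id2l => _.
by apply/andP/idP => [[] //|/eqP eq_A']; rewrite eq_A'.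
Qed.

Lemma sigmaR_pullback (Rl : seq 'I_n) c :
  sigmaR (R:=R) Rl (pullback c) = sigmaR (map f Rl) c.
Proof. by rewrite /sigmaR big_map; apply: eq_bigr => i _; rewrite ffunE. Qed.

Lemma zeta_B1_contraction J Rl :
  zeta J Rl (B1 q B) =
    collapsed_weight J * zeta (push_couplings J) (map f Rl) [set: config q m].
Proof.
rewrite /zeta B1_pullback big_imset => [|c1 c2 _ _]; last exact: pullback_inj.
rewrite mulr_sumr; apply: eq_big => c; first by rewrite !inE.
by rewrite sigmaR_pullback Zg_pullback mulrCA.
Qed.

Lemma push_couplings_nonneg J :
  couplings_nonneg J -> couplings_nonneg (push_couplings J).
Proof. by move=> J_ge0 A' _; apply: sumr_ge0 => A /andP [A_ge2 _]; apply: J_ge0. Qed.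

Lemma num_nonzero_push_couplings J :
  (num_nonzero (push_couplings J) <= num_nonzero J)%N.
Proof.
rewrite /num_nonzero; set nzJ := [set A | _ && (J A != 0)].
apply: (leq_trans _ (leq_imset_card (fun A : {set 'I_n} => f @: A) nzJ)); apply: subset_leq_card.
apply/subsetP => A'; rewrite inE => /andP [_ JA'_neq0].
have [A /and3P [A_ge2 /eqP <- JA_neq0]] :
    exists A : {set 'I_n}, [&& (2 <= #|A|)%N, f @: A == A' & J A != 0].
  apply/existsP; apply: contraR JA'_neq0; rewrite negb_exists => /forallP JA0.
  rewrite /push_couplings big1 // => A /andP [A_ge2 fA].
  by apply/eqP; have := JA0 A; rewrite A_ge2 fA /= negbK.
by apply: imset_f; rewrite inE A_ge2.
Qed.

End Contraction.

Theorem lemma2 (R : realType) (q s : nat) (hq : (2 <= q)%N) :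
  (forall (n : nat) (J : {set 'I_n} -> R) (Rl : seq 'I_n),
      (1 <= n)%N -> couplings_nonneg J -> (num_nonzero J <= s)%N ->
      0 <= zeta J Rl [set: config q n]) ->
  forall (n : nat) (J : {set 'I_n} -> R) (Rl : seq 'I_n) (B : {set 'I_n}),
    (1 <= n)%N -> couplings_nonneg J -> num_nonzero J = s ->
    0 <= zeta J Rl (B1 q B).
Proof.
move=> zeta_ge0 n J Rl B n_gt0 J_ge0 numJ.
have [m [f [g [m_gt0 fgK eq_f]]]] := exists_contraction _ B n_gt0.
rewrite (@zeta_B1_contraction R q _ _ B _ _ fgK eq_f).
apply: mulr_ge0; first exact/ltW/collapsed_weight_gt0.
apply: zeta_ge0.
- exact: m_gt0.
- exact: push_couplings_nonneg.
- by rewrite -numJ num_nonzero_push_couplings.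
Qed.
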